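(* Let $n\ge 3$. The spectral radius of the power graph $P(G(n))$ of the gyrogroup $G(n)$ (defined in the context) satisfies $$\lambda_1(P(\mathbb{Z}_{2^{n-1}}))<\lambda_1(P(G(n)))\le \lambda_1(P(\mathbb{Z}_{2^{n-1}}))+\sqrt{2^{n-1}},$$ where $P(\mathbb{Z}_{2^{n-1}})$ is the power graph of the cyclic group of order $2^{n-1}$.
   Context: Let $n\ge 3$ be an integer and $m=2^{n-1}$. Let $P(n)=\{0,1,\dots,m-1\}$, $H(n)=\{m,m+1,\dots,2^n-1\}$ and $G(n)=P(n)\cup H(n)$. For $i,j\in G(n)$ let $t,s,k\in P(n)$ be the residues modulo $m$ (taken in $\{0,\dots,m-1\}$) of $i+j$, $i+(\frac m2-1)j$ and $(\frac m2+1)i+(\frac m2-1)j$, respectively, and define $i\oplus j=t$ if $i,j\in P(n)$; $i\oplus j=t+m$ if $i\in P(n),j\in H(n)$; $i\oplus j=s+m$ if $i\in H(n),j\in P(n)$; $i\oplus j=k$ if $i,j\in H(n)$. Then $(G(n),\oplus)$ is a gyrogroup with identity $e=0$. Powers are defined by $a^1=a$, $a^{k+1}=a^k\oplus a$ (in a group, the usual powers). The power graph $P(X)$ of $X$ (a group or $G(n)$) is the simple undirected graph with vertex set $X$ in which distinct vertices $u,v$ are adjacent if and only if $u^k=v$ or $v^k=u$ for some positive integer $k$. For a graph $\Gamma$, $\lambda_1(\Gamma)$ denotes the largest eigenvalue of its adjacency matrix (spectral radius). *)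

From HB Require Import structures.
From mathcomp Require Import all_boot all_order all_algebra.
From mathcomp Require Import boolp reals.
Set Implicit Arguments. Unset Strict Implicit. Unset Printing Implicit Defensive.
Import Order.TTheory GRing.Theory Num.Theory.
Local Open Scope ring_scope.

(* Elements of the algebraic structures are represented by natural numbers
   (the carrier {0,...,N-1} is indexed by 'I_N in the adjacency matrix). *)

(* Gyrogroup operation of G(n), with m = 2^(n-1), P(n) = [0,m), H(n) = [m,2^n). *)
Definition gyro_op (n : nat) (i j : nat) : nat :=
  let m := (2 ^ n.-1)%N in
  let t := ((i + j) %% m)%N in
  let s := ((i + (m %/ 2 - 1) * j) %% m)%N in
  let k := (((m %/ 2 + 1) * i + (m %/ 2 - 1) * j) %% m)%N in
  if (i < m)%N then (if (j < m)%N then t else t + m)%N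
  else (if (j < m)%N then s + m else k)%N.

Definition zmod_op (m : nat) (i j : nat) : nat := ((i + j) %% m)%N.

Definition pw (op : nat -> nat -> nat) (a : nat) (k : nat) : nat :=
  iter k.-1 (fun x => op x a) a.

Definition power_adj (op : nat -> nat -> nat) (u v : nat) : Prop :=
  u <> v /\ exists k : nat, (0 < k)%N /\ (pw op u k = v \/ pw op v k = u).

Definition power_graph_adjmx (R : realType) (N : nat) (op : nat -> nat -> nat)
  : 'M[R]_N :=
  \matrix_(i < N, j < N) (asbool (power_adj op i j))%:R.

Definition is_lambda1 (R : realType) (N : nat) (A : 'M[R]_N) (l : R) : Prop :=
  eigenvalue A l /\ forall l' : R, eigenvalue A l' -> l' <= l.

From HB Require Import structures.
From mathcomp Require Import all_boot all_order all_algebra.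
From mathcomp Require Import boolp reals.
From mathcomp Require Import zify ring lra.
Set Implicit Arguments. Unset Strict Implicit. Unset Printing Implicit Defensive.
Import Order.TTheory GRing.Theory Num.Theory.

(* In the cyclic 2-group Z_m every element generates the multiples of
   gcd(u, m), a power of 2, so any two elements are comparable and the power
   graph is complete: lambda_1 = m - 1.  In G(n) the half P(n) is a copy of
   Z_m, while every a in H(n) satisfies a (+) a = 0 and 0 (+) a = a, so its
   only powers are a and 0: the power graph is K_m with m pendant vertices
   attached at 0.  Weighting 0 by 1, P(n) \ {0} by y and H(n) by z gives a
   positive eigenvector for x exactly when x = (m-1)/(x-m+2) + m/x, whose
   cubic has a root in (m-1, m-1+sqrt m]; a nonnegative matrix with a
   positive eigenvector has its eigenvalue as largest eigenvalue. *)

Lemma pw_zmod m a k : 0 < k -> a < m -> pw (zmod_op m) a k = k * a %% m.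
Proof.
case: k => // k _ a_lt_m; rewrite /pw /=.
elim: k => [|k IHk] /=; first by rewrite mul1n modn_small.
by rewrite IHk /zmod_op modnDml mulSn addnC.
Qed.

Lemma zmod_pw_of_gcdn_dvd m u v : u < m -> v < m -> gcdn u m %| v ->
  exists2 k, 0 < k & pw (zmod_op m) u k = v.
Proof.
move=> u_lt_m v_lt_m; have [->|u_gt0] := posnP u.
  rewrite gcd0n => m_dvd_v; exists 1 => //.
  have [-> //|v_gt0] := posnP v.
  by have := dvdn_leq v_gt0 m_dvd_v; lia.
case/dvdnP=> t v_eq; rewrite {}v_eq in v_lt_m *.
have [km kn Bezout _] := egcdnP m u_gt0.
exists (km * t + m); first lia.
rewrite pw_zmod ?addn_gt0 ?orbT //; last lia.
have -> : (km * t + m) * u = (kn * t + u) * m + t * gcdn u m.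
  by rewrite mulnDl (mulnC km) -mulnA Bezout; ring.
by rewrite modnMDl modn_small.
Qed.

Lemma power_adj_zmod_pow2 e u v : u < 2 ^ e -> v < 2 ^ e ->
  power_adj (zmod_op (2 ^ e)) u v <-> u <> v.
Proof.
move=> u_lt v_lt; split=> [[] //|u_neq_v]; split=> //.
have gcd_pow2 x : exists a, gcdn x (2 ^ e) = 2 ^ a.
  have [a _ ->] := dvdn_pfactor (gcdn x (2 ^ e)) e (isT : prime 2) (dvdn_gcdr _ _).
  by exists a.
have reach x y : x < 2 ^ e -> y < 2 ^ e ->
    gcdn x (2 ^ e) %| gcdn y (2 ^ e) ->
    exists2 k, 0 < k & pw (zmod_op (2 ^ e)) x k = y.
  move=> x_lt y_lt dvd_xy; apply: zmod_pw_of_gcdn_dvd => //.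
  exact: dvdn_trans dvd_xy (dvdn_gcdl _ _).
have [[a ga] [b gb]] := (gcd_pow2 u, gcd_pow2 v).
have [a_le_b|b_lt_a] := leqP a b.
  have [|k k_gt0 ukv] := reach u v u_lt v_lt; first by rewrite ga gb dvdn_exp2l.
  by exists k; split=> //; left.
have [|k k_gt0 vku] := reach v u v_lt u_lt; first by rewrite ga gb dvdn_exp2l // ltnW.
by exists k; split=> //; right.
Qed.

Definition clique_pendant_adj (m i j : nat) : bool :=
  (i != j) && [|| i == 0, j == 0 | (i < m) && (j < m)].

Section GyroPowers.
Variable n : nat.
Hypothesis n_gt1 : 1 < n.
Local Notation m := (2 ^ n.-1).

(* [P] and [H] in names stand for the halves P(n) = [0, m) and
   H(n) = [m, 2m) of G(n). *)

Lemma gyro_card : 2 ^ n = 2 * m.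
Proof. by rewrite -expnS prednK // ltnW. Qed.

Lemma gyro_op_PP x a : x < m -> a < m -> gyro_op n x a = zmod_op m x a.
Proof. by move=> x_lt a_lt; rewrite /gyro_op x_lt a_lt. Qed.

Lemma gyro_op_0H a : m <= a < 2 * m -> gyro_op n 0 a = a.
Proof.
case/andP=> m_le_a a_lt.
rewrite /gyro_op [a < _]ltnNge m_le_a expn_gt0 /= add0n.
by rewrite -(subnK m_le_a) modnDr modn_small ?subnK //; lia.
Qed.

(* The coefficients m/2 + 1 and m/2 - 1 of [gyro_op] on H(n) add up to m. *)
Lemma gyro_op_HH a : m <= a -> gyro_op n a a = 0.
Proof.
move=> m_le_a; rewrite /gyro_op ltnNge m_le_a /=.
have [h m_eq h_gt0] : exists2 h, m = 2 * h & 0 < h.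
  by exists (2 ^ n.-2); rewrite ?expn_gt0 // -expnS; congr (2 ^ _); lia.
rewrite m_eq mulKn // -mulnDl.
have -> : h + 1 + (h - 1) = 2 * h by lia.
by rewrite mulnC modnMl.
Qed.

Lemma pw_gyro_P a k : a < m -> pw (gyro_op n) a k = pw (zmod_op m) a k.
Proof.
move=> a_lt; rewrite /pw; elim: k.-1 => //= j ->.
rewrite gyro_op_PP //; case: j => [|j]; first by [].
by rewrite /= /zmod_op ltn_mod expn_gt0.
Qed.

Lemma pw_gyro_H a k : m <= a < 2 * m ->
  pw (gyro_op n) a k = a \/ pw (gyro_op n) a k = 0.
Proof.
move=> a_H; rewrite /pw; elim: k.-1 => [|j IHj] /=; first by left.
case: IHj => ->; [right; apply: gyro_op_HH | left; apply: gyro_op_0H] => //.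
by case/andP: a_H.
Qed.

Lemma pw_gyro_cases u k : u < 2 * m -> 0 < k ->
  [|| pw (gyro_op n) u k == u, pw (gyro_op n) u k == 0
    | (u < m) && (pw (gyro_op n) u k < m)].
Proof.
move=> u_lt k_gt0; have [u_P|m_le_u] := ltnP u m.
  by rewrite pw_gyro_P // pw_zmod // ltn_mod expn_gt0 !orbT.
have u_H : m <= u < 2 * m by rewrite m_le_u.
by case: (pw_gyro_H k u_H) => ->; rewrite eqxx ?orbT.
Qed.

Lemma power_adj_gyro u v : u < 2 ^ n -> v < 2 ^ n ->
  power_adj (gyro_op n) u v <-> clique_pendant_adj m u v.
Proof.
rewrite gyro_card /clique_pendant_adj => u_lt v_lt; split.
  case=> /eqP u_neq_v [k [k_gt0 [vE|uE]]].
    rewrite -vE in u_neq_v *; rewrite u_neq_v /=.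
    case/or3P: (pw_gyro_cases u_lt k_gt0) => [/eqP eq|->|->]; rewrite ?orbT //.
    by rewrite eq eqxx in u_neq_v.
  rewrite -uE eq_sym in u_neq_v *; rewrite u_neq_v /= andbC orbCA.
  case/or3P: (pw_gyro_cases v_lt k_gt0) => [/eqP eq|->|->]; rewrite ?orbT //.
  by rewrite eq eqxx in u_neq_v.
case/andP=> /eqP u_neq_v adj_uv; split=> //.
have clique x y : x < m -> y < m -> x <> y ->
    exists k, 0 < k /\ (pw (gyro_op n) x k = y \/ pw (gyro_op n) y k = x).
  move=> x_lt y_lt /(power_adj_zmod_pow2 x_lt y_lt) [_ [k [k_gt0 xy]]].
  by exists k; rewrite !pw_gyro_P.
have pendant a : m <= a -> pw (gyro_op n) a 2 = 0 by exact: gyro_op_HH.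
case/or3P: adj_uv => [/eqP u0|/eqP v0|/andP[u_P v_P]]; last exact: clique.
  rewrite u0 in u_neq_v *; have [v_P|m_le_v] := ltnP v m.
    by apply: clique; rewrite ?expn_gt0.
  by exists 2; split=> //; right; apply: pendant.
rewrite v0 in u_neq_v *; have [u_P|m_le_u] := ltnP u m.
  by apply: clique; rewrite ?expn_gt0.
by exists 2; split=> //; left; apply: pendant.
Qed.

End GyroPowers.

Local Open Scope ring_scope.

Section PerronBound.
Variables (R : realType) (N : nat) (A : 'M[R]_N) (w : 'rV[R]_N) (lam : R).
Hypotheses (A_ge0 : forall i j, 0 <= A i j) (w_gt0 : forall j, 0 < w 0 j).
Hypothesis wA : w *m A = lam *: w.

(* Collatz-Wielandt: at a coordinate [j] maximising [|v_k| / w_k] for an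
   eigenvector [v], the eigen-equation gives [|l| |v_j| <= lam |v_j|]. *)
Lemma eigenvalue_le_perron l : eigenvalue A l -> l <= lam.
Proof.
case/eigenvalueP=> v vA v_neq0.
have [i vi_neq0] : exists i, v 0 i != 0.
  apply/existsP; apply: contraNT v_neq0; rewrite negb_exists => /forallP v0.
  by apply/eqP/rowP=> k; rewrite mxE; apply/eqP; rewrite -[_ == _]negbK v0.
pose c k := `|v 0 k| / w 0 k.
have [j _ j_max] := @arg_maxP _ _ 'I_N i xpredT c isT.
have vj_gt0 : 0 < `|v 0 j|.
  have cj_gt0 : 0 < c j.
    by apply: lt_le_trans (j_max i isT); rewrite divr_gt0 ?normr_gt0.
  by move: cj_gt0; rewrite /c pmulr_lgt0 // invr_gt0.
have v_le k : `|v 0 k| <= c j * w 0 k.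
  by rewrite -ler_pdivrMr; [exact: j_max | exact: w_gt0].
have coord (u : 'rV[R]_N) a : u *m A = a *: u -> a * u 0 j = \sum_k u 0 k * A k j.
  by move/(congr1 (fun X : 'rV_N => X 0 j)); rewrite !mxE => <-.
suff : `|l| * `|v 0 j| <= lam * `|v 0 j|.
  by rewrite ler_pM2r // => /(le_trans (ler_norm l)).
rewrite -normrM (coord _ _ vA); apply: le_trans (ler_norm_sum _ _ _) _.
apply: le_trans (_ : \sum_k c j * (w 0 k * A k j) <= _).
  apply: ler_sum => k _; rewrite normrM (ger0_norm (A_ge0 k j)) mulrA.
  exact: ler_wpM2r (A_ge0 k j) _ _ (v_le k).
rewrite -mulr_sumr -(coord _ _ wA) mulrCA /c -mulrA mulVf ?mulr1 //.
by rewrite gt_eqF.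
Qed.

Lemma is_lambda1_perron : (0 < N)%N -> is_lambda1 A lam.
Proof.
move=> N_gt0; split; last exact: eigenvalue_le_perron.
apply/eigenvalueP; exists w => //; apply/eqP => /rowP /(_ (Ordinal N_gt0)).
by rewrite mxE => w0; move: (w_gt0 (Ordinal N_gt0)); rewrite w0 ltxx.
Qed.

End PerronBound.

Lemma power_graph_adjmxE (R : realType) N op (adj : nat -> nat -> bool) :
  (forall i j, (i < N)%N -> (j < N)%N -> power_adj op i j <-> adj i j) ->
  power_graph_adjmx R N op = \matrix_(i, j < N) (adj i j)%:R.
Proof.
move=> adjE; apply/matrixP=> i j; rewrite !mxE.
by rewrite (asbool_equiv_eq (adjE _ _ (ltn_ord i) (ltn_ord j))) asboolb.
Qed.

Lemma sumr_const_nat_on (V : nmodType) a b (F : nat -> V) c :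
  (forall i, (a <= i < b)%N -> F i = c) -> \sum_(a <= i < b) F i = c *+ (b - a).
Proof. by move=> Fc; rewrite (eq_big_nat _ _ Fc) sumr_const_nat. Qed.

Lemma sumr_const_nat_but (V : nmodType) a b j (F : nat -> V) c :
  (a <= j < b)%N -> F j = 0 ->
  (forall i, (a <= i < b)%N -> i != j -> F i = c) ->
  \sum_(a <= i < b) F i = c *+ (b - a).-1.
Proof.
case/andP=> a_le_j j_lt_b Fj0 Fc.
rewrite (big_cat_nat a_le_j (ltnW j_lt_b)) (big_cat_nat (leqnSn j) j_lt_b).
rewrite big_nat1 Fj0 /= add0r.
rewrite !(sumr_const_nat_on (c := c)) -?mulrnDr; first by congr (_ *+ _); lia.
  by move=> i /andP[j_lt_i i_lt_b]; apply: Fc; lia.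
by move=> i /andP[a_le_i i_lt_j]; apply: Fc; lia.
Qed.

Lemma complete_graph_left_eigen (R : nzRingType) N :
  const_mx 1 *m \matrix_(i, j < N) ((i : nat) != j)%:R =
  N.-1%:R *: (const_mx 1 : 'rV[R]_N).
Proof.
apply/rowP=> j; rewrite !mxE mulr1.
under eq_bigr do rewrite !mxE mul1r.
rewrite -(big_mkord xpredT (fun i => ((i != j)%:R : R))).
by rewrite (sumr_const_nat_but (j := j) (c := 1)) ?subn0 ?ltn_ord ?eqxx // => i _ ->.
Qed.

Lemma lambda1_power_graph_zmod_pow2 (R : realType) e :
  is_lambda1 (power_graph_adjmx R (2 ^ e) (zmod_op (2 ^ e))) (2 ^ e).-1%:R.
Proof.
rewrite (@power_graph_adjmxE _ _ _ (fun i j => i != j)); last first.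
  by move=> i j i_lt j_lt; rewrite power_adj_zmod_pow2 //; split=> /eqP.
apply: (is_lambda1_perron _ _ (complete_graph_left_eigen _ _)); rewrite ?expn_gt0 //.
  by move=> i j; rewrite mxE ler0n.
by move=> j; rewrite mxE ltr01.
Qed.

Definition clique_pendant_weight (R : nzRingType) (m : nat) (y z : R) (i : nat) : R :=
  if i == 0%N then 1 else if (i < m)%N then y else z.

Lemma clique_pendant_weight_sum (R : nzRingType) N m (y z : R) j :
  (0 < m <= N)%N -> (j < N)%N ->
  \sum_(0 <= i < N) clique_pendant_weight m y z i * (clique_pendant_adj m i j)%:R =
  if j == 0%N then y *+ m.-1 + z *+ (N - m)
  else if (j < m)%N then 1 + y *+ m.-2 else 1.
Proof.
case/andP=> m_gt0 m_le_N j_lt_N.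
pose F i := clique_pendant_weight m y z i * (clique_pendant_adj m i j)%:R.
have weightP i : (0 < i < m)%N -> clique_pendant_weight m y z i = y.
  by move=> i_in; rewrite /clique_pendant_weight ifF ?ifT //; lia.
have weightH i : (m <= i)%N -> clique_pendant_weight m y z i = z.
  by move=> m_le_i; rewrite /clique_pendant_weight !ifF //; lia.
have F_const a b c : (forall i, (a <= i < b)%N ->
    clique_pendant_weight m y z i = c /\ clique_pendant_adj m i j) ->
    \sum_(a <= i < b) F i = c *+ (b - a).
  by move=> h; apply: sumr_const_nat_on => i /h[wc adj]; rewrite /F wc adj mulr1.
have F_off a b : (forall i, (a <= i < b)%N -> ~~ clique_pendant_adj m i j) ->
    \sum_(a <= i < b) F i = 0.
  move=> h; rewrite (sumr_const_nat_on (c := 0)) ?mul0rn // => i /h/negPf adj.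
  by rewrite /F adj mulr0.
have F0 : F 0%N = (j != 0%N)%:R.
  by rewrite /F /clique_pendant_weight /clique_pendant_adj eqxx mul1r andbT eq_sym.
rewrite -/(\sum_(0 <= i < N) F i) big_ltn ?(leq_trans m_gt0) //.
rewrite (big_cat_nat (n := m)) //= F0.
have [j0|j_gt0] := posnP j.
  have adj_j0 i : (0 < i)%N -> clique_pendant_adj m i j.
    by rewrite /clique_pendant_adj j0; lia.
  rewrite add0r -subn1 (F_const _ _ y) => [|i i_in]; last first.
    by split; [apply: weightP | apply: adj_j0]; lia.
  by rewrite (F_const _ _ z) => // i i_in; split; [apply: weightH | apply: adj_j0]; lia.
rewrite (F_off m N) => [|i i_in]; last by rewrite /clique_pendant_adj; lia.
rewrite addr0; have [j_lt_m|m_le_j] := ltnP j m; last first.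
  by rewrite F_off ?addr0 // => i i_in; rewrite /clique_pendant_adj; lia.
rewrite (sumr_const_nat_but (j := j) (c := y)) => [|||i i_in i_neq_j].
- by congr (1 + _ *+ _); lia.
- by rewrite j_gt0.
- by rewrite /F /clique_pendant_adj eqxx mulr0.
have adj_ij : clique_pendant_adj m i j by rewrite /clique_pendant_adj; lia.
by rewrite /F weightP ?adj_ij ?mulr1 //; lia.
Qed.

Lemma clique_pendant_left_eigen (R : nzRingType) N m (x y z : R) :
  (0 < m <= N)%N ->
  x = y *+ m.-1 + z *+ (N - m) -> x * y = 1 + y *+ m.-2 -> x * z = 1 ->
  \row_(i < N) clique_pendant_weight m y z i *m
    \matrix_(i, j < N) (clique_pendant_adj m i j)%:R =
  x *: \row_(i < N) clique_pendant_weight m y z i.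
Proof.
move=> m_in x0 xy xz; apply/rowP=> j; rewrite !mxE.
under eq_bigr do rewrite !mxE.
pose F i := clique_pendant_weight m y z i * (clique_pendant_adj m i j)%:R.
rewrite -(big_mkord xpredT F).
rewrite clique_pendant_weight_sum ?ltn_ord // /clique_pendant_weight.
by case: eqP => _; [rewrite mulr1 | case: ifP].
Qed.

Lemma clique_pendant_root (R : rcfType) (M : R) : 1 <= M ->
  exists2 x, M - 1 < x <= M - 1 + Num.sqrt M & x = (M - 1) / (x - M + 2) + M / x.
Proof.
move=> M_ge1; set s := Num.sqrt M.
have s_ge0 : 0 <= s := sqrtr_ge0 M.
have s2 : s ^+ 2 = M by rewrite sqr_sqrtr //; lra.
(* [x = (M - 1) / (x - M + 2) + M / x] with the denominators cleared *)
pose p : {poly R} := 'X^3 - (M - 2) *: 'X^2 - (2 * M - 1) *: 'X + (M * (M - 2))%:P.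
have pE x : p.[x] = x ^+ 3 - (M - 2) * x ^+ 2 - (2 * M - 1) * x + M * (M - 2).
  by rewrite /p !hornerE.
have p_lo : p.[M - 1] = - M by rewrite pE; ring.
have p_hi : p.[M - 1 + s] = (s + 2) * (M ^+ 2 - M) by rewrite pE -s2; ring.
have [||x /andP[x_ge x_le] /rootP px0] := @poly_ivt _ p (M - 1) (M - 1 + s).
- by lra.
- rewrite p_lo p_hi oppr_le0 (le_trans _ M_ge1) ?ler01 //=.
  by rewrite mulr_ge0 //; nra.
have x_gt : M - 1 < x.
  by rewrite lt_neqAle x_ge andbT; apply/eqP => xE; move: px0; rewrite -xE p_lo; lra.
exists x; first by rewrite x_gt x_le.
apply/eqP; rewrite -subr_eq0; apply/eqP.
have -> : x - ((M - 1) / (x - M + 2) + M / x) = p.[x] / (x * (x - M + 2)).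
  by rewrite pE; field; rewrite !lt0r_neq0 //; lra.
by rewrite px0 mul0r.
Qed.

Lemma lambda1_power_graph_gyro (R : realType) n (M x : R) :
  (1 < n)%N -> M = (2 ^ n.-1)%:R -> M - 1 < x -> x = (M - 1) / (x - M + 2) + M / x ->
  is_lambda1 (power_graph_adjmx R (2 ^ n) (gyro_op n)) x.
Proof.
move=> n_gt1 ME x_gt xE; set m := (2 ^ n.-1)%N in ME.
have m_ge2 : (2 <= m)%N by rewrite -[2%N]/(2 ^ 1)%N leq_exp2l //; lia.
have M_ge2 : 2 <= M by rewrite ME ler_nat.
have [x_gt0 d_gt0] : 0 < x /\ 0 < x - M + 2 by split; lra.
rewrite (@power_graph_adjmxE R _ _ (clique_pendant_adj m)); last first.
  by move=> i j; apply: power_adj_gyro.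
have m1E : m.-1%:R = M - 1 :> R by rewrite ME -subn1 natrB // ltnW.
have m2E : m.-2%:R = M - 2 :> R by rewrite ME -subn2 natrB.
have m_in : (0 < m <= 2 ^ n)%N by rewrite gyro_card // expn_gt0; lia.
apply: (is_lambda1_perron _ _
  (clique_pendant_left_eigen (y := (x - M + 2)^-1) (z := x^-1) m_in _ _ _)).
- by move=> i j; rewrite mxE ler0n.
- move=> j; rewrite mxE /clique_pendant_weight.
  by case: ifP => _; [|case: ifP => _]; rewrite ?invr_gt0.
- have -> : (2 ^ n - m = m)%N by rewrite gyro_card //; lia.
  by rewrite -[_ *+ m.-1]mulr_natl -[_ *+ m]mulr_natl -ME m1E.
- by rewrite -[_ *+ m.-2]mulr_natl m2E; field; rewrite lt0r_neq0.
- by rewrite divff // lt0r_neq0.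
- by rewrite expn_gt0.
Qed.

Theorem mainTheorem9 (R : realType) (n : nat) (hn : (3 <= n)%N) :
  exists l1 l2 : R,
    is_lambda1 (power_graph_adjmx R (2 ^ n.-1) (zmod_op (2 ^ n.-1))) l1 /\
    is_lambda1 (power_graph_adjmx R (2 ^ n) (gyro_op n)) l2 /\
    l1 < l2 /\ l2 <= l1 + Num.sqrt ((2 ^ n.-1)%:R).
Proof.
have n_gt1 : (1 < n)%N by lia.
have m_gt0 : (0 < 2 ^ n.-1)%N by rewrite expn_gt0.
have M_ge1 : 1 <= (2 ^ n.-1)%:R :> R by rewrite ler1n.
have [x /andP[x_gt x_le] xE] := clique_pendant_root M_ge1.
exists (2 ^ n.-1).-1%:R, x; split; first exact: lambda1_power_graph_zmod_pow2.
split; first exact: lambda1_power_graph_gyro n_gt1 erefl x_gt xE.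
by rewrite -subn1 natrB.
Qed.
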